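(* Let $G$ be a connected graph in $\mathcal{C}$. If $G$ contains an induced cycle of length 7, then $G$ has at most 21 vertices.
   Context: $\mathcal{C}=\mathrm{Free}(\text{claw}, 4K_1, \text{5-wheel}, C_5\text{-twin}, P_5\text{-twin}, K_5-e)$, where $\mathrm{Free}(L)$ is the class of graphs with no induced subgraph isomorphic to a member of $L$; the claw is $K_{1,3}$; $4K_1$ is the edgeless graph on 4 vertices; the 5-wheel is $C_5$ plus a vertex adjacent to all five cycle vertices; the $C_5$-twin is $C_5$ plus a new vertex adjacent to one cycle vertex $v$ and both cycle-neighbours of $v$; the $P_5$-twin is a path $p_1p_2p_3p_4p_5$ plus a new vertex adjacent to exactly $p_2,p_3,p_4$; $K_5-e$ is $K_5$ minus one edge. *)

(* Simple graphs = symmetric irreflexive relations on a finType. *)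
From mathcomp Require Import all_boot.
Set Implicit Arguments. Unset Strict Implicit. Unset Printing Implicit Defensive.

Definition induced_in (T1 T2 : finType) (e1 : rel T1) (e2 : rel T2) : Prop :=
  exists f : T1 -> T2, injective f /\ forall x y, e2 (f x) (f y) = e1 x y.

Definition free_of (T1 T2 : finType) (e1 : rel T1) (e2 : rel T2) : Prop :=
  ~ induced_in e1 e2.

Definition cyc_adj (n a b : nat) : bool :=
  (a != b) && (((a.+1 %% n) == b) || ((b.+1 %% n) == a)).

Definition cycle_graph (n : nat) : rel 'I_n := fun x y => cyc_adj n x y.
Arguments cycle_graph n : clear implicits.

Definition claw : rel 'I_4 :=
  fun x y => (val x != val y) && ((val x == 0) || (val y == 0)).

Definition fourK1 : rel 'I_4 := fun _ _ => false.

Definition wheel5 : rel 'I_6 :=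
  fun x y =>
    ((val x < 5) && (val y < 5) && cyc_adj 5 x y)
    || ((val x != val y) && ((val x == 5) || (val y == 5))).

Definition c5twin_adj (a b : nat) : bool :=
  ((a < 5) && (b < 5) && cyc_adj 5 a b)
  || ((a == 5) && (b \in [:: 0; 1; 4]))
  || ((b == 5) && (a \in [:: 0; 1; 4])).
Definition c5twin : rel 'I_6 := fun x y => c5twin_adj x y.

Definition path_adj (a b : nat) : bool := (a.+1 == b) || (b.+1 == a).
Definition p5twin_adj (a b : nat) : bool :=
  ((a < 5) && (b < 5) && path_adj a b)
  || ((a == 5) && (b \in [:: 1; 2; 3]))
  || ((b == 5) && (a \in [:: 1; 2; 3])).
Definition p5twin : rel 'I_6 := fun x y => p5twin_adj x y.

Definition k5e : rel 'I_5 :=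
  fun x y => (val x != val y) && ~~ ((val x <= 1) && (val y <= 1)).

Definition in_classC (T : finType) (e : rel T) : Prop :=
  free_of claw e /\ free_of fourK1 e /\ free_of wheel5 e /\
  free_of c5twin e /\ free_of p5twin e /\ free_of k5e e.

Definition simple_graph (T : finType) (e : rel T) : Prop :=
  symmetric e /\ irreflexive e.

Definition connected_graph (T : finType) (e : rel T) : Prop :=
  forall x y : T, connect e x y.

(* Every vertex of G is determined by its neighbourhood pattern on a fixed
   induced C7.  The 7 cycle vertices give the 7 rows of the adjacency matrix
   of C7.  For an outside vertex, any pattern other than four consecutive
   cycle vertices or the ends of two cycle edges at distance two creates
   a forbidden induced subgraph on the 8 vertices, leaving 14 patterns; two
   distinct outside vertices with the same pattern create one on 9 vertices.
   Hence x |-> pattern x is injective into a set of 7 + 14 = 21 patterns.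
   The finitely many graphs on 8 and 9 vertices are checked by computation. *)

From mathcomp Require Import all_boot.
Set Implicit Arguments. Unset Strict Implicit. Unset Printing Implicit Defensive.

Lemma mem_iota0 k i : (i \in iota 0 k) = (i < k).
Proof. by rewrite mem_iota. Qed.

Definition nat_rel n (P : nat -> nat -> bool) : rel 'I_n := fun x y => P x y.
Arguments nat_rel n P : clear implicits.

Lemma induced_in_trans (T1 T2 T3 : finType) (e1 : rel T1) (e2 : rel T2) (e3 : rel T3) :
  induced_in e1 e2 -> induced_in e2 e3 -> induced_in e1 e3.
Proof.
move=> [f [f_inj f_e]] [g [g_inj g_e]].
exists (g \o f); split; first exact: inj_comp.
by move=> x y /=; rewrite g_e f_e.
Qed.

Section Realisation.

Variables (T : finType) (e : rel T).

Definition realises m (Q : nat -> nat -> bool) (g : nat -> T) :=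
  (forall a b, a < m -> b < m -> e (g a) (g b) = Q a b) /\
  (forall a b, a < m -> b < m -> g a = g b -> a = b).

Lemma realises_induced m Q g : realises m Q g -> induced_in (nat_rel m Q) e.
Proof.
case=> g_e g_inj; exists (fun x : 'I_m => g x); split => [x y|x y].
  by move/(g_inj _ _ (ltn_ord x) (ltn_ord y))/val_inj.
exact: g_e.
Qed.

Lemma induced_realises m Q :
  induced_in (nat_rel m.+1 Q) e -> exists g, realises m.+1 Q g.
Proof.
case=> f [f_inj f_e].
exists (fun a => if insub a is Some i then f i else f ord0).
split=> a b lt_a lt_b; rewrite !insubT.
  by rewrite f_e.
by move/f_inj/(congr1 val).
Qed.

End Realisation.

Definition add_vertex k (H : nat -> nat -> bool) (bs : seq bool) (a b : nat) : bool :=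
  if (a < k) && (b < k) then H a b
  else if (a == k) && (b < k) then nth false bs b
  else if (b == k) && (a < k) then nth false bs a
  else false.

Section Extension.

Variables (T : finType) (e : rel T).

Definition nbr_pattern k (g : nat -> T) (x : T) : seq bool := [seq e x (g i) | i <- iota 0 k].

Definition extend (g : nat -> T) k (x : T) (a : nat) : T := if a < k then g a else x.

Lemma size_nbr_pattern k g x : size (nbr_pattern k g x) = k.
Proof. by rewrite size_map size_iota. Qed.

Lemma nth_nbr_pattern k g x i : i < k -> nth false (nbr_pattern k g x) i = e x (g i).
Proof. by move=> lt_ik; rewrite (nth_map 0) ?size_iota // nth_iota. Qed.

Lemma map_extend_iota (A : Type) (F : T -> A) g k x :
  [seq F (extend g k x i) | i <- iota 0 k.+1] = rcons [seq F (g i) | i <- iota 0 k] (F x).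
Proof.
rewrite -addn1 iotaD map_cat cats1 /= /extend ltnn; congr rcons.
by apply/eq_in_map => i; rewrite mem_iota0 => ->.
Qed.

Lemma nbr_pattern_extend k g x y :
  nbr_pattern k.+1 (extend g k x) y = rcons (nbr_pattern k g y) (e y x).
Proof. exact: map_extend_iota. Qed.

Lemma realises_add_vertex k H g x :
  simple_graph e -> realises e k H g -> x \notin [seq g i | i <- iota 0 k] ->
  realises e k.+1 (add_vertex k H (nbr_pattern k g x)) (extend g k x).
Proof.
move=> [e_sym e_irr] [g_e g_inj] x_out.
have ltSP a : a < k.+1 -> a < k \/ a = k.
  by rewrite ltnS leq_eqVlt => /orP[/eqP|]; [right|left].
have gx_neq i : i < k -> g i = x -> False.
  by move=> lt_ik gi_x; move: x_out; rewrite -gi_x map_f // mem_iota0.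
split=> a b /ltSP[lt_a|->] /ltSP[lt_b|->];
  rewrite /extend /add_vertex ?ltnn ?lt_a ?lt_b ?eqxx ?(ltn_eqF lt_a) ?(ltn_eqF lt_b) ?andbF //=.
- by apply: g_e.
- by rewrite e_sym nth_nbr_pattern.
- by rewrite nth_nbr_pattern.
- by apply: g_inj.
- by move/(gx_neq _ lt_a).
- by move/esym/(gx_neq _ lt_b).
Qed.

End Extension.

Definition is_copy n (P : nat -> nat -> bool) m (Q : nat -> nat -> bool) (w : seq nat) :=
  [&& size w == n, uniq w, all (gtn m) w &
      all (fun i => all (fun j => Q (nth 0 w i) (nth 0 w j) == P i j) (iota 0 n)) (iota 0 n)].

Lemma is_copy_induced n P m Q w :
  is_copy n P m Q w -> induced_in (nat_rel n P) (nat_rel m Q).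
Proof.
case/and4P=> /eqP size_w uniq_w /allP w_lt /allP w_adj.
have in_iota (i : 'I_n) : val i \in iota 0 n by rewrite mem_iota0 ltn_ord.
have lt_w (i : 'I_n) : nth 0 w i < m by apply: w_lt; rewrite mem_nth // size_w.
exists (fun i => Ordinal (lt_w i)); split=> [i j /(congr1 val) /= /eqP|i j].
  by rewrite nth_uniq ?size_w // => /eqP/val_inj.
by apply/eqP; apply: (allP (w_adj _ (in_iota i)) _ (in_iota j)).
Qed.

(* Backtracking search; its output is re-checked by [is_copy], so it needs no
   correctness proof. *)
Fixpoint copy_candidates (P Q : nat -> nat -> bool) m k : seq (seq nat) :=
  if k is k'.+1 then
    [seq rcons w v | w <- copy_candidates P Q m k',
       v <- [seq v <- iota 0 m | (v \notin w) &&
             all (fun i => Q (nth 0 w i) v == P i k') (iota 0 k')]]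
  else [:: [::]].

Definition has_copy n P m Q := has (is_copy n P m Q) (copy_candidates P Q m n).

Lemma has_copy_induced n P m Q :
  has_copy n P m Q -> induced_in (nat_rel n P) (nat_rel m Q).
Proof. by case/hasP=> w _; apply: is_copy_induced. Qed.

Definition claw_adj (a b : nat) := (a != b) && ((a == 0) || (b == 0)).
Definition wheel5_adj (a b : nat) :=
  ((a < 5) && (b < 5) && cyc_adj 5 a b) || ((a != b) && ((a == 5) || (b == 5))).
Definition k5e_adj (a b : nat) := (a != b) && ~~ ((a <= 1) && (b <= 1)).

Definition forbidden_in m Q :=
  [|| has_copy 4 claw_adj m Q, has_copy 4 (fun _ _ => false) m Q,
      has_copy 6 wheel5_adj m Q, has_copy 6 c5twin_adj m Q,
      has_copy 6 p5twin_adj m Q | has_copy 5 k5e_adj m Q].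

Lemma classC_not_forbidden (T : finType) (e : rel T) m Q :
  in_classC e -> induced_in (nat_rel m Q) e -> ~~ forbidden_in m Q.
Proof.
case=> no_claw [no_4K1 [no_wheel5 [no_c5twin [no_p5twin no_k5e]]]] Q_in_e.
have copy_in n P : has_copy n P m Q -> induced_in (nat_rel n P) e.
  by move/has_copy_induced/induced_in_trans; apply.
apply/negP; case/orP=> [/copy_in/no_claw//|]; case/orP=> [/copy_in/no_4K1//|].
case/orP=> [/copy_in/no_wheel5//|]; case/orP=> [/copy_in/no_c5twin//|].
by case/orP=> /copy_in; [apply: no_p5twin | apply: no_k5e].
Qed.

Fixpoint bitseqs n : seq (seq bool) :=
  if n is n'.+1 then [seq b :: bs | b <- [:: false; true], bs <- bitseqs n'] else [:: [::]].

Lemma bitseqsP bs : bs \in bitseqs (size bs).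
Proof.
elim: bs => [|b bs IHbs] //=.
have mem_cons c : c :: bs \in [seq c :: cs | cs <- bitseqs (size bs)].
  by rewrite mem_map // => ? ? [].
by case: b; rewrite !mem_cat mem_cons ?orbT.
Qed.

Definition row_patterns k (H : nat -> nat -> bool) : seq (seq bool) :=
  [seq [seq H i j | j <- iota 0 k] | i <- iota 0 k].

Definition free_patterns k H : seq (seq bool) :=
  [seq bs <- bitseqs k | ~~ forbidden_in k.+1 (add_vertex k H bs)].

(* Vertex [k.+1] is a second copy of vertex [k] (same neighbourhood [bs] on
   [H]), adjacent to it iff [c]. *)
Definition twins_forbidden k H :=
  all (fun bs => all (fun c =>
         forbidden_in k.+2 (add_vertex k.+1 (add_vertex k H bs) (rcons bs c))) [:: false; true])
      (free_patterns k H).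

Section PatternBound.

Variables (T : finType) (e : rel T) (k : nat) (H : nat -> nat -> bool) (g : nat -> T).
Hypotheses (e_simple : simple_graph e) (e_C : in_classC e) (g_H : realises e k H g).

Let pattern := nbr_pattern e k g.

Lemma outside_pattern_free x :
  x \notin [seq g i | i <- iota 0 k] -> pattern x \in free_patterns k H.
Proof.
move=> x_out; have size_x : size (pattern x) = k := size_nbr_pattern e k g x.
rewrite mem_filter -[X in bitseqs X]size_x bitseqsP andbT.
apply: classC_not_forbidden e_C _; apply: realises_induced.
exact: realises_add_vertex.
Qed.

Lemma inside_pattern i : i < k -> pattern (g i) = [seq H i j | j <- iota 0 k].
Proof.
case: g_H => g_e _ lt_ik; apply/eq_in_map => j.
by rewrite mem_iota0 => lt_jk; apply: g_e.
Qed.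

Lemma inside_pattern_row i : i < k -> pattern (g i) \in row_patterns k H.
Proof. by move=> lt_ik; rewrite inside_pattern //; apply/mapP; exists i; rewrite ?mem_iota0. Qed.

Lemma outside_pattern_inj x y :
  x \notin [seq g i | i <- iota 0 k] -> y \notin [seq g i | i <- iota 0 k] ->
  twins_forbidden k H -> pattern x = pattern y -> x = y.
Proof.
move=> x_out y_out twins_H eq_xy; apply/eqP/negPn/negP => neq_xy.
have g'_H := realises_add_vertex e_simple g_H x_out.
have y_out' : y \notin [seq extend g k x i | i <- iota 0 k.+1].
  by rewrite (map_extend_iota id) mem_rcons inE negb_or eq_sym neq_xy.
have := realises_add_vertex e_simple g'_H y_out'.
rewrite nbr_pattern_extend -/pattern -eq_xy.
move=> /realises_induced/(classC_not_forbidden e_C).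
have /(allP twins_H) /allP -> // := outside_pattern_free x_out.
by case: (e y x).
Qed.

Hypotheses (twins_H : twins_forbidden k H)
  (uniq_patterns : uniq (row_patterns k H ++ free_patterns k H)).

Lemma pattern_inj : injective pattern.
Proof.
move: uniq_patterns; rewrite cat_uniq => /and3P[uniq_rows /hasPn rows_free _].
have nth_rows i : i < k -> nth [::] (row_patterns k H) i = [seq H i j | j <- iota 0 k].
  by move=> lt_ik; rewrite (nth_map 0) ?size_iota // nth_iota.
have inside_inj i j : i < k -> j < k -> pattern (g i) = pattern (g j) -> i = j.
  move=> lt_ik lt_jk; rewrite !inside_pattern // => eq_ij; apply/eqP.
  by rewrite -(nth_uniq [::] _ _ uniq_rows) ?size_map ?size_iota // !nth_rows // eq_ij.
move=> x y.
case: (boolP (x \in [seq g i | i <- iota 0 k])) => [/mapP[i + ->]|x_out];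
  case: (boolP (y \in [seq g i | i <- iota 0 k])) => [/mapP[j + ->]|y_out];
  rewrite ?mem_iota0.
- by move=> lt_ik lt_jk /inside_inj ->.
- move=> lt_ik eq_xy; have := rows_free _ (outside_pattern_free y_out).
  by rewrite -eq_xy inside_pattern_row.
- move=> lt_jk eq_xy; have := rows_free _ (outside_pattern_free x_out).
  by rewrite eq_xy inside_pattern_row.
- exact: outside_pattern_inj.
Qed.

Lemma card_le_patterns : #|T| <= k + size (free_patterns k H).
Proof.
have pattern_in x : pattern x \in row_patterns k H ++ free_patterns k H.
  rewrite mem_cat; case: (boolP (x \in [seq g i | i <- iota 0 k])) => [/mapP[i+ ->]|x_out].
    by rewrite mem_iota0 => /inside_pattern_row ->.
  by rewrite outside_pattern_free ?orbT.
have size_patterns :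
    size (row_patterns k H ++ free_patterns k H) = k + size (free_patterns k H).
  by rewrite size_cat size_map size_iota.
rewrite cardE -(size_map pattern) -size_patterns uniq_leq_size //.
  by rewrite (map_inj_uniq pattern_inj) enum_uniq.
by move=> _ /mapP[x _ ->].
Qed.

End PatternBound.

Definition C7_free_nbhds : seq (seq bool) :=
  [seq [seq i \in [seq (j + r) %% 7 | j <- N] | i <- iota 0 7]
  | N <- [:: [:: 0; 1; 2; 3]; [:: 0; 1; 3; 4]], r <- iota 0 7].

Lemma free_patterns_C7 : perm_eq (free_patterns 7 (cyc_adj 7)) C7_free_nbhds.
Proof. by vm_compute. Qed.

Lemma twins_forbidden_C7 : twins_forbidden 7 (cyc_adj 7).
Proof. by rewrite /twins_forbidden (perm_all _ free_patterns_C7); vm_compute. Qed.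

Lemma uniq_patterns_C7 : uniq (row_patterns 7 (cyc_adj 7) ++ free_patterns 7 (cyc_adj 7)).
Proof.
have perm_patterns : perm_eq (row_patterns 7 (cyc_adj 7) ++ free_patterns 7 (cyc_adj 7))
                             (row_patterns 7 (cyc_adj 7) ++ C7_free_nbhds).
  by rewrite perm_cat2l free_patterns_C7.
by rewrite (perm_uniq perm_patterns); vm_compute.
Qed.

Theorem claim2 (T : finType) (e : rel T) :
  simple_graph e -> connected_graph e -> in_classC e ->
  induced_in (cycle_graph 7) e ->
  #|T| <= 21.
Proof.
move=> e_simple _ e_C /induced_realises[g g_C7].
have := card_le_patterns e_simple e_C g_C7 twins_forbidden_C7 uniq_patterns_C7.
by rewrite (perm_size free_patterns_C7).
Qed.
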